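(* Let $A$ be a finite abelian $p$-group written additively, with a decomposition $A=A_1\oplus\dots\oplus A_k$ into nontrivial homocyclic components of pairwise different exponents, and let $H$ be a finite group of order not divisible by $p$. Let $\Lambda:\mathrm{Aut}(A)\to\mathrm{Aut}(A_1/pA_1)\times\dots\times\mathrm{Aut}(A_k/pA_k)$ be the surjective homomorphism sending an automorphism, written as a matrix $(u_{ij})$ with $u_{ij}\in\mathrm{Hom}(A_i,A_j)$ (so that $x=(x_1,\dots,x_k)\mapsto(\sum_i u_{i1}(x_i),\dots,\sum_i u_{ik}(x_i))$), to $(\overline{u_{11}},\dots,\overline{u_{kk}})$ where $\overline{u_{ii}}(x+pA_i)=u_{ii}(x)+pA_i$, and let $\Lambda_i:\mathrm{Aut}(A)\to\mathrm{Aut}(A_i/pA_i)$ be $\Lambda$ followed by projection to the $i$-th factor. Then for representations $\alpha,\beta:H\to\mathrm{Aut}(A)$ we have $\alpha\sim\beta$ if and only if $\alpha\circ\Lambda_i\sim\beta\circ\Lambda_i$ for all $i=1,\dots,k$ (here $\alpha\circ\Lambda_i$ means first $\alpha$, then $\Lambda_i$).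
   Context: A representation of $H$ on an abelian group $B$ is a homomorphism $H\to\mathrm{Aut}(B)$. $\mathrm{Aut}(B)$ acts on representations by $\alpha^\psi(h)=\psi^{-1}\alpha(h)\psi$, and $\alpha\sim\beta$ means $\alpha^\psi=\beta$ for some $\psi\in\mathrm{Aut}(B)$. An abelian $p$-group is homocyclic if it is a direct product of cyclic groups of the same order. Maps are composed left to right. *)

From mathcomp Require Import all_boot all_fingroup all_solvable.
Set Implicit Arguments. Unset Strict Implicit. Unset Printing Implicit Defensive.
Local Open Scope group_scope.

(* Groups are written multiplicatively in MathComp: "pA" is the subgroup of
   p-th powers, and permutations compose left to right: (s * t) x = t (s x),
   x ^ y = y^-1 * x * y, matching the paper's conventions. *)

(* p A = the subgroup {x^p | x in A} (generated; equal to the set for abelian A) *)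
Definition pmult (gT : finGroupType) (p : nat) (G : {set gT}) : {group gT} :=
  <<[set x ^+ p | x in G]>>%G.

Definition compl_comp (gT : finGroupType) (k : nat) (Ai : 'I_k -> {group gT})
  (i : 'I_k) : {set gT} := \prod_(j < k | j != i) Ai j.

Definition proj_comp (gT : finGroupType) (k : nat) (Ai : 'I_k -> {group gT})
  (i : 'I_k) (x : gT) : gT := remgr (compl_comp Ai i) (Ai i) x.

(* Lambda_i u : A_i/pA_i -> A_i/pA_i,  x + pA_i |-> u_ii(x) + pA_i,
   where u_ii(x) = i-th coordinate of u(x) *)
Definition Lambda_i (gT : finGroupType) (p k : nat) (Ai : 'I_k -> {group gT})
  (i : 'I_k) (u : {perm gT}) (c : coset_of (pmult p (Ai i)))
  : coset_of (pmult p (Ai i)) :=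
  coset (pmult p (Ai i)) (proj_comp Ai i (u (repr c))).

Definition is_rep (gT hT : finGroupType) (B : {set gT}) (H : {group hT})
  (alpha : hT -> {perm gT}) : Prop :=
  morphic H alpha /\ {in H, forall h, alpha h \in Aut B}.

Definition rep_equiv (gT hT : finGroupType) (B : {set gT}) (H : {set hT})
  (alpha beta : hT -> {perm gT}) : Prop :=
  exists2 psi, psi \in Aut B & {in H, forall h, alpha h ^ psi = beta h}.

(* (alpha o Lambda_i) ~ (beta o Lambda_i): some psi in Aut(A_i/pA_i) with
   psi^-1 (Lambda_i (alpha h)) psi = Lambda_i (beta h) (left-to-right
   composition), i.e. psi (Lambda_i (alpha h) c) = Lambda_i (beta h) (psi c)
   for all c in A_i/pA_i. *)
Definition lam_equiv (gT hT : finGroupType) (p k : nat) (Ai : 'I_k -> {group gT})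
  (i : 'I_k) (H : {set hT}) (alpha beta : hT -> {perm gT}) : Prop :=
  exists2 psi : {perm coset_of (pmult p (Ai i))},
    psi \in Aut (Ai i / pmult p (Ai i)) &
    {in H, forall h, {in Ai i / pmult p (Ai i), forall c,
       psi (@Lambda_i gT p k Ai i (alpha h) c) = @Lambda_i gT p k Ai i (beta h) (psi c)}}.

(* Write an endomorphism u of A as a matrix (u_ij), u_ij : A_i -> A_j.  For
   i != j the composite A_i -> A_j -> A_i lands in pA_i: a map into a
   homocyclic component of larger exponent lands in its p-th powers, because
   its image has smaller order.  Hence Lambda_i (u v) = Lambda_i u Lambda_i v
   for all endomorphisms u, v, which gives the easy direction.  Conversely,
   lift the automorphisms psi_i conjugating alpha Lambda_i to beta Lambda_i to
   a block-diagonal endomorphism phi of A (a basis of the homocyclic A_i may be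
   sent anywhere), and average: f = sum_h alpha(h) phi beta(h)^-1 intertwines
   alpha and beta, and Lambda_i f = |H| psi_i is invertible as p does not
   divide |H|.  An endomorphism whose reductions Lambda_i are all onto is onto
   modulo Phi(A) = pA (mod p its matrix is block triangular for the order by
   exponent), hence an automorphism. *)

From mathcomp Require Import all_boot all_fingroup all_solvable.
Set Implicit Arguments. Unset Strict Implicit. Unset Printing Implicit Defensive.
Local Open Scope group_scope.

Section Generic.
Variable gT : finGroupType.
Implicit Types G N : {group gT}.

Lemma perm_prod_commute (I : eqType) (r1 r2 : seq I) (F : I -> gT) :
  perm_eq r1 r2 -> {in r1 &, forall i j, commute (F i) (F j)} ->
  \prod_(i <- r1) F i = \prod_(i <- r2) F i.
Proof.
elim: r1 r2 => [|a r1 IH] r2 pe cF.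
  by move: pe; rewrite perm_sym => /perm_nilP ->.
have a_r2 : a \in r2 by rewrite -(perm_mem pe) mem_head.
case/splitPr: a_r2 pe => s1 s2 pe.
have pe' : perm_eq r1 (s1 ++ s2).
  by rewrite -(perm_cons a) (perm_trans pe) // -cat1s perm_catCA.
have s12r1 : {subset s1 ++ s2 <= a :: r1}.
  by move=> x; rewrite -(perm_mem pe') => xr; rewrite inE xr orbT.
rewrite big_cons (IH _ pe') ?big_cat ?big_cons /=; last first.
  by move=> i j ir jr; apply: cF; rewrite inE ?ir ?jr orbT.
have ca : commute (F a) (\prod_(i <- s1) F i).
  rewrite big_seq; apply: commute_prod => i s1i.
  by apply: cF; rewrite ?mem_head // s12r1 // mem_cat s1i.
by rewrite mulgA ca -mulgA.
Qed.

Lemma prodgD1_commute (I : finType) (i : I) (F : I -> gT) :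
  (forall a b, commute (F a) (F b)) ->
  \prod_j F j = F i * \prod_(j | j != i) F j.
Proof.
move=> cF; have -> : F i = \prod_(j | j == i) F j by rewrite big_pred1_eq.
rewrite [X in X * _]big_mkcond [X in _ * X]big_mkcond -prodgM_commute => [|a b _ _].
  by apply: eq_bigr => j _; case: eqP => [->|]; rewrite ?mulg1 ?mul1g.
by do 2 case: ifP => _; rewrite /commute ?mulg1 ?mul1g //; apply: cF.
Qed.

(* In a homocyclic group of exponent [p^e], ['Ohm_a(G) = 'Mho^(e-a)(G)]. *)
Lemma mem_Mho1_homocyclic p G y m : prime p -> p.-group G -> homocyclic G ->
  y \in G -> p.-nat m -> y ^+ m = 1 -> m < exponent G -> y \in 'Mho^1(G).
Proof.
move=> p_pr pG homG Gy p_m ym_1 m_lt.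
have [e De] : {e | exponent G = (p ^ e)%N} by apply: p_natP; rewrite pnat_exponent.
have [a Da] := p_natP p_m.
rewrite De Da ltn_exp2l ?prime_gt1 // in m_lt.
have: y \in 'Ohm_a(G).
  rewrite (OhmEabelian pG) ?(abelianS (Ohm_sub a G)) //; last by case/andP: homG.
  by rewrite !inE Gy -Da ym_1 eqxx.
rewrite (homocyclic_Ohm_Mho a pG homG) De pfactorK //.
by apply: subsetP; apply: Mho_leq; rewrite subn_gt0.
Qed.

Lemma eq_in_morph_gen (rT : finGroupType) G (X : {set gT}) (f g : gT -> rT) :
  {in G &, {morph f : x y / x * y}} -> {in G &, {morph g : x y / x * y}} ->
  X \subset G -> {in X, f =1 g} -> {in <<X>>, f =1 g}.
Proof.
move=> fM gM sXG eqX.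
have eq1 : f 1 = g 1 by rewrite -[f 1]/(Morphism fM 1) -[g 1]/(Morphism gM 1) !morph1.
have eqG : group_set [set y in G | f y == g y].
  apply/group_setP; split=> [|x y]; first by rewrite inE group1 eq1 /=.
  rewrite !inE => /andP[Gx /eqP fgx] /andP[Gy /eqP fgy].
  by rewrite groupM //= fM // gM // fgx fgy.
have: <<X>> \subset Group eqG.
  by rewrite gen_subG; apply/subsetP=> x Xx; rewrite inE (subsetP sXG) //= eqX.
by move/subsetP=> sXeq x /sXeq; rewrite inE => /andP[_ /eqP].
Qed.

Lemma extend_cyclic_basis (b : seq gT) G (T : {group gT}) (t : gT -> gT) :
  \big[dprod/1]_(x <- b) <[x]> = G -> abelian T ->
  (forall x, x \in b -> t x \in T /\ #[t x] %| #[x]) ->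
  exists f : gT -> gT, [/\ {in G &, {morph f : x y / x * y}},
     {in G, forall x, f x \in T} & {in b, f =1 t}].
Proof.
elim: b G => [|x b IH] G.
  rewrite big_nil => <- _ _; exists (fun _ => 1).
  by split=> [y z _ _|y _|]; rewrite ?mulg1 ?group1.
rewrite big_cons => defG cT bT.
have [[_ G' _ defG'] _ _ _] := dprodP defG; rewrite defG' in defG.
have [f' [f'M f'T f't]] : exists f' : gT -> gT, [/\ {in G' &, {morph f' : x y / x * y}},
     {in G', forall x, f' x \in T} & {in b, f' =1 t}].
  by apply: IH => // y yb; apply: bT; rewrite inE yb orbT.
have [txT tx_dvd] := bT x (mem_head _ _).
pose fm := Morphism f'M.
have sfT : fm @* G' \subset T.
  by rewrite morphimEdom; apply/subsetP=> _ /imsetP[y Gy ->]; apply: f'T.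
have seT : eltm tx_dvd @* <[x]> \subset T by rewrite im_eltm cycle_subG.
have cfe : fm @* G' \subset 'C(eltm tx_dvd @* <[x]>) by apply: sub_abelian_cent2 cT _ _.
exists (dprodm defG cfe); split=> [y z Gy Gz|y|y]; first by rewrite morphM.
  rewrite -(dprodW defG) => /mulsgP[a c Xa Gc ->].
  rewrite dprodmE // groupM //; [apply: (subsetP seT) | apply: (subsetP sfT)];
    exact: mem_morphim.
rewrite inE => /predU1P[->|yb]; first by rewrite dprodmEl ?cycle_id //= eltm_id.
have Gy : y \in G'.
  rewrite -(bigdprodWY defG') mem_gen // bigcup_seq.
  by apply: (subsetP (bigcup_sup y yb)); apply: cycle_id.
by rewrite dprodmEr //= f't.
Qed.

Lemma mem_repr_quotient G N c : N \subset G -> c \in G / N -> repr c \in G.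
Proof.
move=> sNG /morphimP[y Ny Gy ->].
have [z Nz ->] := kercoset_rcoset (repr_coset_norm _) Ny (coset_reprK _).
by rewrite groupM // (subsetP sNG).
Qed.

(* All elements of a basis of a homocyclic group have the full exponent as
   order, so any choice of their images in G extends to an endomorphism. *)
Lemma homocyclic_lift G N (psi : coset_of N -> coset_of N) :
  homocyclic G -> N <| G ->
  {in G / N &, {morph psi : c d / c * d}} -> {in G / N, forall c, psi c \in G / N} ->
  exists f : gT -> gT, [/\ {in G &, {morph f : x y / x * y}},
    {in G, forall x, f x \in G} &
    {in G, forall x, coset N (f x) = psi (coset N x)}].
Proof.
move=> homG /andP[sNG nNG] psiM psiG.
have cG : abelian G by case/andP: homG.
have [b defG ob] := abelian_structure cG.
have bG x : x \in b -> x \in G.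
  move=> xb; rewrite -(bigdprodWY defG) mem_gen // bigcup_seq.
  by apply: (subsetP (bigcup_sup x xb)); apply: cycle_id.
pose t x := repr (psi (coset N x)).
have bt x : x \in b -> t x \in G /\ #[t x] %| #[x].
  move=> xb; have tG : t x \in G.
    by rewrite (mem_repr_quotient sNG) ?psiG ?mem_quotient ?bG.
  split=> //; have: #[x] \in map order b by apply: map_f.
  rewrite ob abelian_type_homocyclic // mem_nseq => /andP[_ /eqP ->].
  exact: dvdn_exponent.
have [f [fM fG ft]] := extend_cyclic_basis defG cG bt.
exists f; split=> //.
have cfM : {in G &, {morph (fun y => coset N (f y)) : x y / x * y}}.
  by move=> x y Gx Gy /=; rewrite fM // morphM // (subsetP nNG) ?fG.
have cpsiM : {in G &, {morph (fun y => psi (coset N y)) : x y / x * y}}.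
  by move=> x y Gx Gy /=; rewrite morphM ?(subsetP nNG) // psiM // mem_quotient.
rewrite -(bigdprodWY defG); apply: (eq_in_morph_gen cfM cpsiM).
  by rewrite bigcup_seq; apply/bigcupsP=> x xb; rewrite cycle_subG bG.
move=> y; rewrite bigcup_seq => /bigcupP[x xb /cycleP[n ->]] /=.
rewrite -[coset N (f _)]/(Morphism cfM _) morphX ?bG //= ft //.
by rewrite -[psi (coset N _)]/(Morphism cpsiM _) morphX ?bG //= coset_reprK.
Qed.

Lemma Aut_of_imset G (f : gT -> gT) :
  {in G &, {morph f : x y / x * y}} -> f @: G = G ->
  exists2 a, a \in Aut G & {in G, a =1 f}.
Proof.
move=> fM fG; have imf : Morphism fM @* G = G by rewrite morphimEdom.
have injf : 'injm (Morphism fM) by rewrite -card_im_injm imf.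
by exists (aut injf imf); [exact: Aut_aut | exact: autE].
Qed.

End Generic.

Section Endomorphisms.
Variables (gT : finGroupType) (A : {group gT}).
Hypothesis cA : abelian A.

Definition is_endo (f : gT -> gT) :=
  {in A &, {morph f : x y / x * y}} /\ {in A, forall x, f x \in A}.

Lemma endo1 f : is_endo f -> f 1 = 1.
Proof. by case=> fM _; exact: (morph1 (Morphism fM)). Qed.

Lemma endoX f n : is_endo f -> {in A, forall x, f (x ^+ n) = f x ^+ n}.
Proof. by case=> fM _; exact: (morphX (Morphism fM)). Qed.

Lemma endo_morph_prod f (I : eqType) (r : seq I) (F : I -> gT) : is_endo f ->
  {in r, forall i, F i \in A} -> f (\prod_(i <- r) F i) = \prod_(i <- r) f (F i).
Proof.
move=> ef; elim: r => [|a r IHr] FA; first by rewrite !big_nil endo1.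
have FrA : {in r, forall i, F i \in A} by move=> i ri; rewrite FA // inE ri orbT.
have rA : \prod_(i <- r) F i \in A by rewrite big_seq group_prod.
by case: ef => fM _; rewrite !big_cons fM ?IHr ?FA ?mem_head.
Qed.

Lemma Aut_endo (u : {perm gT}) : u \in Aut A -> is_endo u.
Proof.
move=> Au; split=> [x y Ax Ay|x]; last exact: Aut_closed.
by rewrite -(autmE Au) morphM.
Qed.

Lemma endo_comp f g : is_endo f -> is_endo g -> is_endo (g \o f).
Proof.
case=> fM fA [gM gA]; split=> [x y Ax Ay|x Ax] /=; last by rewrite gA ?fA.
by rewrite fM // gM ?fA.
Qed.

Lemma endo_prod (I : eqType) (r : seq I) (F : I -> gT -> gT) :
  (forall a, a \in r -> is_endo (F a)) -> is_endo (fun x => \prod_(a <- r) F a x).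
Proof.
elim: r => [|a r IHr] eF; first by split=> [x y _ _|x _]; rewrite !big_nil ?mulg1.
have [aM aA] := eF a (mem_head a r).
have [rM rA] : is_endo (fun x => \prod_(b <- r) F b x).
  by apply: IHr => b br; apply: eF; rewrite inE br orbT.
split=> [x y Ax Ay|x Ax]; rewrite !big_cons; last by rewrite groupM ?aA ?rA.
rewrite aM // rM // -!mulgA; congr (_ * _); rewrite !mulgA; congr (_ * _).
by apply: (centsP cA); rewrite ?aA ?rA.
Qed.

Section Averaging.
Variables (hT : finGroupType) (H : {group hT}) (alpha beta : hT -> {perm gT}).
Hypotheses (rep_alpha : is_rep A H alpha) (rep_beta : is_rep A H beta).

Lemma rep_equiv_of_intertwiner f : is_endo f -> f @: A = A ->
  {in H, forall h, {in A, forall x, f (alpha h x) = beta h (f x)}} ->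
  rep_equiv A H alpha beta.
Proof.
case: rep_alpha rep_beta => _ Aalpha [_ Abeta] [fM _] fA fab.
have [a Aa af] := Aut_of_imset fM fA; exists a => // h Hh.
suff comm_a : alpha h * a = a * beta h by rewrite conjgE comm_a mulKg.
apply/permP=> z; rewrite !permM.
have [Az | A'z] := boolP (z \in A); last first.
  by rewrite (out_Aut (Aalpha h Hh)) // (out_Aut Aa) // (out_Aut (Abeta h Hh)).
by rewrite !af ?fab // Aut_closed ?Aalpha.
Qed.

Definition average (phi : gT -> gT) (x : gT) :=
  \prod_(g <- enum H) (beta g)^-1 (phi (alpha g x)).

Lemma endo_average phi : is_endo phi -> is_endo (average phi).
Proof.
case: rep_alpha rep_beta => _ Aalpha [_ Abeta] ephi.
apply: endo_prod => g; rewrite mem_enum => Hg.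
apply: endo_comp (Aut_endo (groupVr (Abeta g Hg))).
exact: endo_comp (Aut_endo (Aalpha g Hg)) ephi.
Qed.

(* Substituting [g := h * g] in the average. *)
Lemma average_intertwines phi : is_endo phi ->
  {in H, forall h, {in A, forall x, average phi (alpha h x) = beta h (average phi x)}}.
Proof.
case: rep_alpha rep_beta => /morphicP alphaM Aalpha [/morphicP betaM Abeta].
move=> [_ phiA] h Hh x Ax; pose F g := (beta g)^-1 (phi (alpha g x)).
have FA g : g \in H -> F g \in A.
  move=> Hg; rewrite /F; apply: (Aut_closed (groupVr (Abeta g Hg))).
  by apply: phiA; apply: (Aut_closed (Aalpha g Hg)).
rewrite /average (endo_morph_prod (Aut_endo (Abeta h Hh))); last first.
  by move=> g; rewrite mem_enum; apply: FA.
transitivity (\prod_(g <- map ( *%g h) (enum H)) beta h (F g)).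
  rewrite big_map big_seq [RHS]big_seq; apply: eq_bigr => g; rewrite mem_enum => Hg.
  by rewrite /F alphaM ?betaM // permM invMg permM permKV.
symmetry; apply: perm_prod_commute => [|a b]; last first.
  rewrite !mem_enum => Ha Hb; apply: (centsP cA);
  by apply: (Aut_closed (Abeta h Hh)); apply: FA.
apply: uniq_perm; rewrite ?(map_inj_uniq (mulgI h)) ?enum_uniq // => y.
rewrite mem_enum; apply/idP/mapP => [Hy|[g]]; last first.
  by rewrite mem_enum => Hg ->; rewrite groupM.
by exists (h^-1 * y); rewrite ?mem_enum ?groupM ?groupV ?mulKVg.
Qed.

End Averaging.

Section Decomposition.
Variables (p k : nat) (Ai : 'I_k -> {group gT}).
Hypotheses (p_pr : prime p) (pA : p.-group A)
  (defA : \big[dprod/1]_(i < k) Ai i = A)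
  (homAi : forall i, homocyclic (Ai i))
  (exp_neq : forall i j, i != j -> exponent (Ai i) != exponent (Ai j)).

Local Notation proj := (proj_comp Ai).
Local Notation P i := (pmult p (Ai i)).
Local Notation Abar i := (Ai i / P i).

Lemma comp_sub i : Ai i \subset A.
Proof. by rewrite -(bigdprodWY defA) sub_gen // (bigcup_sup i). Qed.

Lemma comp_pgroup i : p.-group (Ai i).
Proof. exact: pgroupS (comp_sub i) pA. Qed.

Lemma comp_dprod_compl i : exists2 C : {group gT}, compl_comp Ai i = C &
  Ai i \x C = A /\ forall j, j != i -> Ai j \subset C.
Proof.
move: defA; rewrite (bigD1 i) //= => dA.
have [[_ C _ defC] _ _ _] := dprodP dA; rewrite defC in dA.
exists C; first by rewrite /compl_comp (bigdprodW defC).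
split=> // j ji; rewrite -(bigdprodWY defC) sub_gen // (bigcup_sup j) //.
Qed.

Lemma proj_compM i : {in A &, {morph proj i : x y / x * y}}.
Proof.
have [C eC [dA _]] := comp_dprod_compl i; rewrite /proj_comp eC.
have [_ _ _ tiAC] := dprodP dA.
apply: remgrM; last by rewrite -sub_abelian_normal // -(dprodW dA) mulG_subr.
by apply/complP; rewrite setIC -(dprodWC dA).
Qed.

Lemma mem_proj_comp i x : x \in A -> proj i x \in Ai i.
Proof.
have [C eC [dA _]] := comp_dprod_compl i; rewrite /proj_comp eC.
by rewrite -(dprodWC dA); apply: mem_remgr.
Qed.

Lemma proj_comp_id i x : x \in Ai i -> proj i x = x.
Proof.
have [C eC [dA _]] := comp_dprod_compl i; rewrite /proj_comp eC.
by have [_ _ _ tiAC] := dprodP dA; apply: remgr_id; rewrite setIC.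
Qed.

Lemma proj_comp1 i j x : j != i -> x \in Ai j -> proj i x = 1.
Proof.
have [C eC [_ sAjC]] := comp_dprod_compl i; rewrite /proj_comp eC => ji Ajx.
by rewrite remgr1 ?(subsetP (sAjC j ji)).
Qed.

Lemma endo_proj_comp i : is_endo (proj i).
Proof.
by split=> [|x Ax]; [exact: proj_compM | rewrite (subsetP (comp_sub i)) ?mem_proj_comp].
Qed.

Lemma prod_proj_comp x : x \in A -> \prod_(j < k) proj j x = x.
Proof.
move=> Ax; have [c [Aic -> _]] := mem_bigdprod defA Ax.
have Ac j : c j \in A by rewrite (subsetP (comp_sub j)) ?Aic.
apply: eq_bigr => i _; rewrite (endo_morph_prod (endo_proj_comp i)) // (big_only1 i) //.
  by rewrite proj_comp_id ?Aic.
by move=> j ji _; rewrite (proj_comp1 ji) ?Aic.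
Qed.

Lemma proj_comp_mem_of_others (M : {group gT}) i x : x \in A -> x \in M ->
  (forall j, j != i -> proj j x \in M) -> proj i x \in M.
Proof.
move=> Ax Mx Mproj.
have Mrest : \prod_(j | j != i) proj j x \in M by rewrite group_prod.
move: Mx; rewrite -{1}(prod_proj_comp Ax) (prodgD1_commute i) ?groupMr // => a b.
by apply: (centsP cA); apply: (endo_proj_comp _).2.
Qed.

Lemma pmult_Mho1 i : P i = 'Mho^1(Ai i) :> {set gT}.
Proof. by rewrite (MhoE 1 (comp_pgroup i)) expn1. Qed.

Lemma pmult_sub i : P i \subset Ai i.
Proof. by rewrite pmult_Mho1 Mho_sub. Qed.

Lemma norm_pmult i : A \subset 'N(P i).
Proof. exact: sub_abelian_norm cA (subset_trans (pmult_sub i) (comp_sub i)). Qed.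

Lemma proj_endo_Mho f i z : is_endo f -> z \in 'Mho^1(A) ->
  proj i (f z) \in 'Mho^1(Ai i).
Proof.
move=> ef; rewrite (MhoEabelian 1 pA cA) expn1 => /imsetP[w Aw ->].
rewrite -[proj i _]/((proj i \o f) _) (endoX _ (endo_comp ef (endo_proj_comp i))) //.
have Aiw : (proj i \o f) w \in Ai i by rewrite mem_proj_comp // ef.2.
by rewrite -[p]expn1 Mho_p_elt // (mem_p_elt (comp_pgroup i)).
Qed.

Lemma proj_endo_Mho1 f i j x : is_endo f -> x \in Ai i ->
  exponent (Ai i) < exponent (Ai j) -> proj j (f x) \in 'Mho^1(Ai j).
Proof.
move=> ef Aix lt_ij; have efj := endo_comp ef (endo_proj_comp j).
have Ax : x \in A by rewrite (subsetP (comp_sub i)).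
apply: mem_Mho1_homocyclic (comp_pgroup j) (homAi j) _ _ _ lt_ij => //.
- by rewrite mem_proj_comp // ef.2.
- by rewrite pnat_exponent comp_pgroup.
by rewrite -[proj j _]/((proj j \o f) _) -(endoX _ efj) // expg_exponent // endo1.
Qed.

Lemma proj_offdiag_pmult f g i j x : i != j -> is_endo f -> is_endo g ->
  x \in Ai i -> proj i (g (proj j (f x))) \in P i.
Proof.
move=> ij ef eg Aix; rewrite pmult_Mho1.
have := exp_neq ij; rewrite neq_ltn => /orP[lt_ij | lt_ji].
  apply: proj_endo_Mho eg _; apply: (subsetP (MhoS 1 (comp_sub j))).
  exact: proj_endo_Mho1 ef Aix lt_ij.
apply: proj_endo_Mho1 eg _ lt_ji.
by rewrite mem_proj_comp // ef.2 ?(subsetP (comp_sub i)).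
Qed.

(* [Lambda_i] extended from automorphisms to all endomorphisms [f] of [A];
   [Lambda_i u] and [Lam i u] are convertible. *)
Definition Lam i (f : gT -> gT) : coset_of (P i) -> coset_of (P i) :=
  fun c => coset (P i) (proj i (f (repr c))).
Arguments Lam : clear implicits.

Lemma LamE f i x : is_endo f -> x \in Ai i ->
  Lam i f (coset (P i) x) = coset (P i) (proj i (f x)).
Proof.
move=> ef Aix; have Ax : x \in A by rewrite (subsetP (comp_sub i)).
have Nx : x \in 'N(P i) by rewrite (subsetP (norm_pmult i)).
rewrite /Lam; have [z Pz ->] : exists2 z, z \in P i & repr (coset (P i) x) = z * x.
  exact: kercoset_rcoset (repr_coset_norm _) Nx (coset_reprK _).
have Az : z \in A by rewrite (subsetP (comp_sub i)) ?(subsetP (pmult_sub i)).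
rewrite ef.1 // proj_compM ?ef.2 // coset_kerl // pmult_Mho1.
by apply: proj_endo_Mho ef _; rewrite (subsetP (MhoS 1 (comp_sub i))) -?pmult_Mho1.
Qed.

Lemma Lam_in f i c : is_endo f -> c \in Abar i -> Lam i f c \in Abar i.
Proof.
move=> ef /morphimP[x _ Aix ->].
by rewrite LamE // mem_quotient ?mem_proj_comp ?ef.2 ?(subsetP (comp_sub i)).
Qed.

Lemma LamM f i : is_endo f -> {in Abar i &, {morph Lam i f : c d / c * d}}.
Proof.
move=> ef _ _ /morphimP[x Nx Aix ->] /morphimP[y Ny Aiy ->].
have [Ax Ay] : x \in A /\ y \in A by rewrite !(subsetP (comp_sub i)).
rewrite -morphM // !LamE ?groupM // ef.1 // proj_compM ?ef.2 // morphM //;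
  by rewrite (subsetP (norm_pmult i)) ?(endo_proj_comp i).2 ?ef.2.
Qed.

Lemma eq_in_Lam f g i : {in A, f =1 g} -> {in Abar i, Lam i f =1 Lam i g}.
Proof.
move=> fg c Qc; rewrite /Lam fg // (subsetP (comp_sub i)) //.
exact: mem_repr_quotient (pmult_sub i) Qc.
Qed.

Lemma Lam_id i : {in Abar i, Lam i id =1 id}.
Proof.
by move=> _ /morphimP[x _ Aix ->]; rewrite LamE ?proj_comp_id //; split.
Qed.

(* The off-diagonal entries of [f] and [g] only contribute elements of
   [P i] to the diagonal entry of their composite. *)
Lemma Lam_comp f g i : is_endo f -> is_endo g ->
  {in Abar i, forall c, Lam i (g \o f) c = Lam i g (Lam i f c)}.
Proof.
move=> ef eg _ /morphimP[x _ Aix ->].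
have Ax : x \in A by rewrite (subsetP (comp_sub i)).
have Afx : f x \in A by rewrite ef.2.
have egi := endo_comp eg (endo_proj_comp i).
rewrite (LamE (endo_comp ef eg)) // (LamE ef) // (LamE eg) ?mem_proj_comp //=.
rewrite -{1}(prod_proj_comp Afx).
rewrite -[proj i _]/((proj i \o g) _) (endo_morph_prod egi) => [|j _]; last first.
  by rewrite (endo_proj_comp j).2.
rewrite (morph_prod (coset_morphism (P i))) => [|j _]; last first.
  by rewrite (subsetP (norm_pmult i)) ?egi.2 ?(endo_proj_comp j).2.
rewrite (big_only1 i) // => j ji _; apply: coset_id.
by apply: proj_offdiag_pmult ef eg Aix; rewrite eq_sym.
Qed.

Lemma Lam_prod i (I : eqType) (r : seq I) (F : I -> gT -> gT) :
  (forall a, a \in r -> is_endo (F a)) ->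
  {in Abar i, forall c,
     Lam i (fun x => \prod_(a <- r) F a x) c = \prod_(a <- r) Lam i (F a) c}.
Proof.
move=> eF _ /morphimP[x _ Aix ->].
have Ax : x \in A by rewrite (subsetP (comp_sub i)).
rewrite (LamE (endo_prod eF)) //=.
rewrite (endo_morph_prod (F := fun a => F a x) (endo_proj_comp i)) => [|a ra]; last first.
  by rewrite (eF a ra).2.
rewrite [in LHS]big_seq [RHS]big_seq.
rewrite (morph_prod (coset_morphism (P i))) => [|a ra]; last first.
  by rewrite (subsetP (norm_pmult i)) ?(endo_proj_comp i).2 ?(eF a ra).2.
by apply: eq_bigr => a ra; rewrite (LamE (eF a ra)).
Qed.

Lemma Lam_Aut i u : u \in Aut A ->
  exists2 a, a \in Aut (Abar i) & {in Abar i, a =1 Lam i u}.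
Proof.
move=> Au; have [eu eu'] := (Aut_endo Au, Aut_endo (groupVr Au)).
apply: Aut_of_imset (LamM eu) _; apply/eqP; rewrite eqEsubset.
apply/andP; split; first by apply/subsetP=> _ /imsetP[c Qc ->]; apply: Lam_in.
apply/subsetP=> c Qc; apply/imsetP; exists (Lam i u^-1 c); first exact: Lam_in.
rewrite -Lam_comp // (eq_in_Lam (g := id)) ?Lam_id // => x _ /=.
by rewrite permKV.
Qed.

Lemma lift_Lam (psi : forall i, {perm coset_of (P i)}) :
  (forall i, psi i \in Aut (Abar i)) ->
  exists2 phi, is_endo phi & forall i, {in Abar i, Lam i phi =1 psi i}.
Proof.
move=> Apsi.
have liftAi i : exists f : gT -> gT, [/\ {in Ai i &, {morph f : x y / x * y}},
    {in Ai i, forall x, f x \in Ai i} &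
    {in Ai i, forall x, coset (P i) (f x) = psi i (coset (P i) x)}].
  apply: homocyclic_lift (homAi i) _ _ (@Aut_closed _ _ _ (Apsi i)).
    by rewrite pmult_Mho1 Mho_normal.
  by move=> c d Qc Qd; rewrite -(autmE (Apsi i)) morphM.
have [F FP] := fin_all_exists liftAi.
have eF a : is_endo (F a \o proj a).
  have [FM FAi _] := FP a; split=> [x y Ax Ay|x Ax] /=.
    by rewrite proj_compM // FM // mem_proj_comp.
  by rewrite (subsetP (comp_sub a)) // FAi ?mem_proj_comp.
have ephi : is_endo (fun x => \prod_(a < k) F a (proj a x)).
  by apply: endo_prod => a _; apply: eF.
exists (fun x => \prod_(a < k) F a (proj a x)) => // i _ /morphimP[x _ Aix ->].
have [_ FAi Fpsi] := FP i; rewrite LamE //=.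
rewrite (big_only1 i) //= ?proj_comp_id ?Fpsi ?FAi // => a ai _.
rewrite (proj_comp1 (i := a) (j := i)) 1?eq_sym //.
by have [FM _ _] := FP a; exact: (morph1 (Morphism FM)).
Qed.

(* Induction on the exponent: the diagonal entry of [f] on [Ai i] is onto mod
   [p], the entries from [Ai i] into components of larger exponent are [p]-th
   powers, and components of smaller exponent are already covered. *)
Lemma comp_sub_of_Lam_onto f (M : {group gT}) : is_endo f ->
  'Mho^1(A) \subset M -> {in A, forall x, f x \in M} ->
  (forall i, {in Abar i, forall c, exists2 d, d \in Abar i & Lam i f d = c}) ->
  forall i, Ai i \subset M.
Proof.
move=> ef sMhoM fM ontoLam.
have MhoAiM j : 'Mho^1(Ai j) \subset M := subset_trans (MhoS 1 (comp_sub j)) sMhoM.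
suff sub_lt n i : exponent (Ai i) < n -> Ai i \subset M.
  by move=> i; apply: (sub_lt _ i (ltnSn _)).
elim: n i => [|n IHn] i // lt_in; apply/subsetP=> x Aix.
have [_ /morphimP[y _ Aiy ->]] := ontoLam i _ (mem_quotient (P i) Aix).
have [Ay Ax] : y \in A /\ x \in A by rewrite !(subsetP (comp_sub i)).
have Afy : f y \in A by rewrite ef.2.
rewrite LamE // => eq_fy_x.
have [z Pz ->] := kercoset_rcoset (subsetP (norm_pmult i) x Ax)
  (subsetP (norm_pmult i) _ ((endo_proj_comp i).2 _ Afy)) (esym eq_fy_x).
rewrite groupM //; first by rewrite (subsetP (MhoAiM i)) -?pmult_Mho1.
apply: proj_comp_mem_of_others (fM y Ay) _ => // j ji.
have := exp_neq ji; rewrite neq_ltn => /orP[lt_ji | lt_ij].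
  by rewrite (subsetP (IHn j (leq_trans lt_ji lt_in))) ?mem_proj_comp.
by rewrite (subsetP (MhoAiM j)) // (proj_endo_Mho1 ef Aiy).
Qed.

(* Frattini argument: [f] is onto modulo ['Phi(A) = 'Mho^1(A)]. *)
Lemma endo_onto_of_Lam_onto f : is_endo f ->
  (forall i, {in Abar i, forall c, exists2 d, d \in Abar i & Lam i f d = c}) ->
  f @: A = A.
Proof.
move=> ef ontoLam; have [fM fA] := ef.
have <- : Morphism fM @* A = f @: A by rewrite morphimEdom.
have sfA : Morphism fM @* A \subset A.
  by rewrite morphimEdom; apply/subsetP=> _ /imsetP[x Ax ->]; apply: fA.
have sAM : A \subset Morphism fM @* A <*> 'Mho^1(A).
  rewrite -{1}(bigdprodWY defA) gen_subG; apply/bigcupsP=> i _.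
  apply: comp_sub_of_Lam_onto ef (joing_subr _ _) _ ontoLam i => x Ax.
  by apply: (subsetP (joing_subl _ _)); apply: (mem_morphim (Morphism fM)).
suff /Phi_nongen : 'Phi(A) <*> Morphism fM @* A = A by rewrite genGid.
by apply/eqP; rewrite eqEsubset join_subG Phi_sub sfA (Phi_Mho pA cA) joingC.
Qed.

Section Equivalence.
Variables (hT : finGroupType) (H : {group hT}) (alpha beta : hT -> {perm gT}).
Hypotheses (rep_alpha : is_rep A H alpha) (rep_beta : is_rep A H beta).

Lemma lam_equiv_of_rep_equiv i :
  rep_equiv A H alpha beta -> lam_equiv p Ai i H alpha beta.
Proof.
case: rep_alpha rep_beta => _ Aalpha [_ Abeta] [psi Apsi psiE].
have [a Aa aE] := Lam_Aut i Apsi; exists a; first exact: Aa.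
move=> h Hh c Qc.
have ea := Aut_endo (Aalpha h Hh); have eb := Aut_endo (Abeta h Hh).
have epsi := Aut_endo Apsi.
change (a (Lam i (alpha h) c) = Lam i (beta h) (a c)).
rewrite (aE _ (Lam_in ea Qc)) (aE _ Qc).
rewrite -(Lam_comp ea epsi Qc) -(Lam_comp epsi eb Qc).
apply: (eq_in_Lam _ Qc) => x _ /=.
by rewrite -(psiE h Hh) conjgE !permM permK.
Qed.

Lemma Lam_average i (psi : {perm coset_of (P i)}) phi :
  psi \in Aut (Abar i) -> is_endo phi -> {in Abar i, Lam i phi =1 psi} ->
  {in H, forall h, {in Abar i, forall c,
     psi (Lam i (alpha h) c) = Lam i (beta h) (psi c)}} ->
  {in Abar i, forall c, Lam i (average H alpha beta phi) c = psi c ^+ #|H|}.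
Proof.
case: rep_alpha rep_beta => _ Aalpha [_ Abeta] Apsi ephi phiE psiE c Qc.
have Qpsic : psi c \in Abar i by rewrite (Aut_closed Apsi).
have eterm g : g \in enum H -> is_endo ((beta g)^-1 \o (phi \o alpha g)).
  rewrite mem_enum => Hg; apply: endo_comp (Aut_endo (groupVr (Abeta g Hg))).
  exact: endo_comp (Aut_endo (Aalpha g Hg)) ephi.
rewrite /average (Lam_prod eterm Qc).
transitivity (\prod_(g <- enum H) psi c); last first.
  by rewrite big_const_seq count_predT -cardE iter_mulg_1.
rewrite big_seq [RHS]big_seq; apply: eq_bigr => g; rewrite mem_enum => Hg.
have eag := Aut_endo (Aalpha g Hg); have ebg := Aut_endo (Abeta g Hg).
have ebg' := Aut_endo (groupVr (Abeta g Hg)).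
rewrite (Lam_comp (endo_comp eag ephi) ebg' Qc) (Lam_comp eag ephi Qc).
rewrite (phiE _ (Lam_in eag Qc)) (psiE g Hg c Qc) -(Lam_comp ebg ebg' Qpsic).
rewrite (eq_in_Lam (g := id) _ Qpsic) ?(Lam_id Qpsic) // => x _ /=.
exact: permK.
Qed.

(* Averaging a common lift of the [psi_i] over [H] multiplies each diagonal
   entry by [#|H|], which is invertible on the [p]-group [Ai i / P i]. *)
Lemma rep_equiv_of_lam_equiv : ~~ (p %| #|H|) ->
  (forall i, lam_equiv p Ai i H alpha beta) -> rep_equiv A H alpha beta.
Proof.
move=> p'H /fin_all_exists2[psi Apsi psiE].
have [phi ephi phiE] := lift_Lam Apsi.
have eavg := endo_average rep_alpha rep_beta ephi.
apply: (rep_equiv_of_intertwiner rep_alpha rep_beta eavg); last first.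
  exact: (average_intertwines rep_alpha rep_beta ephi).
apply: endo_onto_of_Lam_onto eavg _ => i c Qc.
have coH : coprime #|Abar i| #|H|.
  apply: (@pnat_coprime p); last by rewrite p'natE.
  exact: quotient_pgroup (comp_pgroup i).
exists ((psi i)^-1 (c ^+ expg_invn (Abar i) #|H|)).
  by rewrite (Aut_closed (groupVr (Apsi i))) ?groupX.
rewrite (Lam_average (Apsi i) ephi (phiE i) (psiE i)); last first.
  by rewrite (Aut_closed (groupVr (Apsi i))) ?groupX.
by rewrite permKV -expgM mulnC expgM expgK.
Qed.

End Equivalence.
End Decomposition.

End Endomorphisms.

Theorem lemma3p8 (p : nat) (gT : finGroupType) (A : {group gT}) (k : nat)
  (Ai : 'I_k -> {group gT}) (hT : finGroupType) (H : {group hT})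
  (alpha beta : hT -> {perm gT}) :
  prime p -> abelian A -> p.-group A ->
  \big[dprod/1]_(i < k) Ai i = A ->
  (forall i, Ai i :!=: 1) ->
  (forall i, homocyclic (Ai i)) ->
  (forall i j, i != j -> exponent (Ai i) != exponent (Ai j)) ->
  ~~ (p %| #|H|) ->
  is_rep A H alpha -> is_rep A H beta ->
  rep_equiv A H alpha beta <-> (forall i, lam_equiv p Ai i H alpha beta).
Proof.
move=> p_pr cA pA defA _ homAi exp_neq p'H rep_alpha rep_beta.
have lam_equivP :=
  lam_equiv_of_rep_equiv cA p_pr pA defA homAi exp_neq rep_alpha rep_beta.
have rep_equivP :=
  rep_equiv_of_lam_equiv cA p_pr pA defA homAi exp_neq rep_alpha rep_beta.
by split=> [equiv_ab i | /(rep_equivP p'H)]; first exact: lam_equivP.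
Qed.
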